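(* Let $A\in\mathbb{R}^{d\times d}$ be invertible, $\bm{b}\in\mathbb{R}^d$, $\bm{x}_0\in\mathbb{R}^d$, $\Sigma_0$ symmetric positive-definite, and write $\langle\bm{u},\bm{v}\rangle_{A\Sigma_0A^\top}=\bm{u}^\top A\Sigma_0A^\top\bm{v}$ with associated norm $\|\cdot\|_{A\Sigma_0A^\top}$. Define recursively: $\bm{r}_0=\bm{b}-A\bm{x}_0$, $\tilde{\bm{s}}_1=\bm{r}_0$, $\bm{s}_1=\tilde{\bm{s}}_1/\|\tilde{\bm{s}}_1\|_{A\Sigma_0A^\top}$; for $k\ge1$, with $S_k=[\bm{s}_1,\dots,\bm{s}_k]$ and $\Lambda_k=S_k^\top A\Sigma_0A^\top S_k$, set $\bm{x}_k=\bm{x}_0+\Sigma_0A^\top S_k\Lambda_k^{-1}S_k^\top\bm{r}_0$, $\bm{r}_k=\bm{b}-A\bm{x}_k$, $\tilde{\bm{s}}_{k+1}=\bm{r}_k-\langle\bm{s}_k,\bm{r}_k\rangle_{A\Sigma_0A^\top}\bm{s}_k$, and, assuming $\tilde{\bm{s}}_{k+1}\neq\bm{0}$, $\bm{s}_{k+1}=\tilde{\bm{s}}_{k+1}/\|\tilde{\bm{s}}_{k+1}\|_{A\Sigma_0A^\top}$. Then for each $m$ such that $\tilde{\bm{s}}_1,\dots,\tilde{\bm{s}}_m\neq\bm{0}$, the set $\{\bm{s}_i\}_{i=1}^m$ is $A\Sigma_0A^\top$-orthonormal, and consequently $\Lambda_m=I$ (so in particular the recursion is well defined).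
   Context: $\bm{x}_k$ is the posterior mean of $\bm{x}$ under the prior $\mathcal{N}(\bm{x}_0,\Sigma_0)$ conditioned on $S_k^\top A\bm{x}=S_k^\top\bm{b}$. A set $\{\bm{s}_i\}$ is $A\Sigma_0A^\top$-orthonormal if $\langle\bm{s}_i,\bm{s}_j\rangle_{A\Sigma_0A^\top}=\delta_{ij}$. *)

From mathcomp Require Import all_boot all_order all_algebra.
From mathcomp Require Import reals.
Set Implicit Arguments. Unset Strict Implicit. Unset Printing Implicit Defensive.
Import Order.TTheory GRing.Theory Num.Theory.
Local Open Scope ring_scope.

Section BayesCG.
Variables (R : realType) (d : nat).
Variables (A Sigma0 : 'M[R]_d) (b x0 : 'cV[R]_d).

Definition Mw : 'M[R]_d := A *m Sigma0 *m A^T.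

Definition ipw (u v : 'cV[R]_d) : R := (u^T *m Mw *m v) 0 0.
Definition nrmw (u : 'cV[R]_d) : R := Num.sqrt (ipw u u).

(* normalization u / ||u|| (0 if u = 0, by convention 0^-1 = 0) *)
Definition normalize (u : 'cV[R]_d) : 'cV[R]_d := (nrmw u)^-1 *: u.

(* S_k = [s_1, ..., s_k] built from the list ss = [:: s_1; ...; s_k] *)
Definition Smat (k : nat) (ss : seq 'cV[R]_d) : 'M[R]_(d, k) :=
  \matrix_(i < d, j < k) (nth 0 ss j) i 0.

Definition Lam (k : nat) (ss : seq 'cV[R]_d) : 'M[R]_k :=
  (Smat k ss)^T *m Mw *m Smat k ss.

Definition r0 : 'cV[R]_d := b - A *m x0.

Definition xk (k : nat) (ss : seq 'cV[R]_d) : 'cV[R]_d :=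
  x0 + Sigma0 *m A^T *m Smat k ss *m invmx (Lam k ss) *m (Smat k ss)^T *m r0.

Definition rk (k : nat) (ss : seq 'cV[R]_d) : 'cV[R]_d := b - A *m xk k ss.

(* stilde_{k+1} computed from ss = [:: s_1; ...; s_k]:
   stilde_1 = r0, stilde_{k+1} = r_k - <s_k, r_k> s_k for k >= 1 *)
Definition stilde_next (k : nat) (ss : seq 'cV[R]_d) : 'cV[R]_d :=
  if k is 0 then r0
  else let r := rk k ss in let sk := nth 0 ss k.-1 in r - ipw sk r *: sk.

(* sseq n = [:: s_1; ...; s_n] *)
Fixpoint sseq (n : nat) : seq 'cV[R]_d :=
  if n is n'.+1 then rcons (sseq n') (normalize (stilde_next n' (sseq n')))
  else [::].

Definition stilde (i : nat) : 'cV[R]_d := stilde_next i.-1 (sseq i.-1).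
Definition s (i : nat) : 'cV[R]_d := nth 0 (sseq i) i.-1.

End BayesCG.

From mathcomp Require Import all_boot all_order all_algebra.
From mathcomp Require Import reals.
Set Implicit Arguments. Unset Strict Implicit. Unset Printing Implicit Defensive.
Import Order.TTheory GRing.Theory Num.Theory.
Local Open Scope ring_scope.

(* If s_1, ..., s_k are M-orthonormal
   then Lambda_k = I and r_k = r_0 - M S_k S_k^T r_0, so s_j^T r_k = 0 for j <= k.
   Since r_i is a combination of s_i and s_(i+1), the residuals r_0, ..., r_k are
   then pairwise orthogonal, and s_j^T r_0 = s_j^T r_(j-1) is nonzero (otherwise
   r_(j-1) = 0 and stilde_j = 0).  Hence (s_j^T r_0) M s_j = r_(j-1) - r_j gives
   <s_j, r_k>_M = 0 for j < k, so stilde_(k+1) = r_k - <s_k, r_k>_M s_k is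
   M-orthogonal to s_1, ..., s_k. *)

Section EuclideanDot.
Variables (R : comPzRingType) (n : nat).
Implicit Types u v w : 'cV[R]_n.

Definition dotv u v : R := (u^T *m v) 0 0.

Lemma dotvC u v : dotv u v = dotv v u.
Proof. by rewrite /dotv -(trmxK (u^T *m v)) trmx_mul !trmxK [LHS]mxE. Qed.

Lemma dotvDr u v w : dotv u (v + w) = dotv u v + dotv u w.
Proof. by rewrite /dotv mulmxDr mxE. Qed.

Lemma dotvZr u a v : dotv u (a *: v) = a * dotv u v.
Proof. by rewrite /dotv -scalemxAr mxE. Qed.

Lemma dotvBr u v w : dotv u (v - w) = dotv u v - dotv u w.
Proof. by rewrite dotvDr -scaleN1r dotvZr mulN1r. Qed.

Lemma dotv0r u : dotv u 0 = 0.
Proof. by rewrite /dotv mulmx0 mxE. Qed.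

Lemma dotvDl u v w : dotv (v + w) u = dotv v u + dotv w u.
Proof. by rewrite dotvC dotvDr !(dotvC u). Qed.

Lemma dotvBl u v w : dotv (v - w) u = dotv v u - dotv w u.
Proof. by rewrite dotvC dotvBr !(dotvC u). Qed.

Lemma dotvZl u a v : dotv (a *: v) u = a * dotv v u.
Proof. by rewrite dotvC dotvZr dotvC. Qed.

Lemma dotv0l u : dotv 0 u = 0.
Proof. by rewrite dotvC dotv0r. Qed.

End EuclideanDot.

Lemma dotvv_eq0 (R : realDomainType) n (u : 'cV[R]_n) : dotv u u = 0 -> u = 0.
Proof.
rewrite /dotv mxE => sum_sqr_eq0; apply/matrixP => i j; rewrite ord1 mxE.
have sqr_ge0 k : 0 <= u^T 0 k * u k 0 by rewrite mxE -expr2 sqr_ge0.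
have /eqP := psumr_eq0P (fun k _ => sqr_ge0 k) sum_sqr_eq0 (i := i) isT.
by rewrite mxE mulf_eq0 orbb => /eqP.
Qed.

Section WeightedInnerProduct.
Variables (R : realType) (d : nat) (A Sigma0 : 'M[R]_d).
Hypothesis A_unit : A \in unitmx.
Hypothesis Sigma0_sym : Sigma0^T = Sigma0.
Hypothesis Sigma0_pd : forall v : 'cV[R]_d, v != 0 -> 0 < (v^T *m Sigma0 *m v) 0 0.

Local Notation M := (Mw A Sigma0).
Local Notation ip := (ipw A Sigma0).
Local Notation nrm := (nrmw A Sigma0).
Local Notation normalize := (normalize A Sigma0).
Implicit Types u v w : 'cV[R]_d.

Lemma ipwE u v : ip u v = dotv u (M *m v).
Proof. by rewrite /ipw /dotv -mulmxA. Qed.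

Lemma ipwZr u a v : ip u (a *: v) = a * ip u v.
Proof. by rewrite !ipwE -scalemxAr dotvZr. Qed.

Lemma ipwBr u v w : ip u (v - w) = ip u v - ip u w.
Proof. by rewrite !ipwE mulmxBr dotvBr. Qed.

Lemma ipw0r u : ip u 0 = 0.
Proof. by rewrite ipwE mulmx0 dotv0r. Qed.

Lemma trmx_Mw : M^T = M.
Proof. by rewrite /Mw !trmx_mul trmxK Sigma0_sym mulmxA. Qed.

Lemma ipwEl u v : ip u v = dotv (M *m u) v.
Proof. by rewrite /ipw /dotv trmx_mul trmx_Mw. Qed.

Lemma ipwC u v : ip u v = ip v u.
Proof. by rewrite ipwE ipwEl dotvC. Qed.

Lemma ipwZl u a v : ip (a *: v) u = a * ip v u.
Proof. by rewrite ipwC ipwZr ipwC. Qed.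

Lemma ipw_gt0 u : u != 0 -> 0 < ip u u.
Proof.
move=> u_neq0; have AT_unit : A^T \in unitmx by rewrite unitmx_tr.
have ATu_neq0 : A^T *m u != 0.
  by apply: contraNneq u_neq0 => ATu0; rewrite -(mulKmx AT_unit u) ATu0 mulmx0.
by have := Sigma0_pd ATu_neq0; rewrite /ipw /Mw trmx_mul trmxK !mulmxA.
Qed.

Lemma nrmw_gt0 u : u != 0 -> 0 < nrm u.
Proof. by move=> u_neq0; rewrite /nrmw sqrtr_gt0 ipw_gt0. Qed.

Lemma normalizeK u : u != 0 -> nrm u *: normalize u = u.
Proof. by move=> u_neq0; rewrite scalerA mulfV ?scale1r ?gt_eqF ?nrmw_gt0. Qed.

Lemma ipw_normalize u : u != 0 -> ip (normalize u) (normalize u) = 1.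
Proof.
move=> u_neq0; have ip_gt0 := ipw_gt0 u_neq0.
rewrite ipwZl ipwZr mulrA -expr2 exprVn sqr_sqrtr ?ltW //.
by rewrite mulVf ?gt_eqF.
Qed.

End WeightedInnerProduct.

Section SearchMatrix.
Variables (R : realType) (d k : nat) (A Sigma0 : 'M[R]_d) (ss : seq 'cV[R]_d).

Lemma mulmx_Smat (v : 'cV[R]_k) :
  Smat k ss *m v = \sum_(a < k) v a 0 *: nth 0 ss a.
Proof.
apply/matrixP => i j; rewrite !mxE summxE ord1; apply: eq_bigr => a _.
by rewrite !mxE mulrC.
Qed.

Lemma trmx_Smat_mul (r : 'cV[R]_d) a :
  ((Smat k ss)^T *m r) a 0 = dotv (nth 0 ss a) r.
Proof. by rewrite /dotv !mxE; apply: eq_bigr => i _; rewrite !mxE. Qed.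

Lemma LamE a c : Lam A Sigma0 k ss a c = ipw A Sigma0 (nth 0 ss a) (nth 0 ss c).
Proof.
rewrite /Lam /ipw !mxE; apply: eq_bigr => i _; rewrite !mxE; congr (_ * _).
by apply: eq_bigr => p _; rewrite !mxE.
Qed.

End SearchMatrix.

Section BayesCGRecursion.
Variables (R : realType) (d : nat) (A Sigma0 : 'M[R]_d) (b x0 : 'cV[R]_d).
Hypothesis A_unit : A \in unitmx.
Hypothesis Sigma0_sym : Sigma0^T = Sigma0.
Hypothesis Sigma0_pd : forall v : 'cV[R]_d, v != 0 -> 0 < (v^T *m Sigma0 *m v) 0 0.

Local Notation M := (Mw A Sigma0).
Local Notation ip := (ipw A Sigma0).
Local Notation nrm := (nrmw A Sigma0).
Local Notation r0 := (r0 A b x0).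
Local Notation sseq := (sseq A Sigma0 b x0).
Local Notation s := (s A Sigma0 b x0).
Local Notation stilde := (stilde A Sigma0 b x0).

Lemma size_sseq n : size (sseq n) = n.
Proof. by elim: n => //= n IHn; rewrite size_rcons IHn. Qed.

Lemma s_succ k : s k.+1 = normalize A Sigma0 (stilde k.+1).
Proof. by rewrite /s /= nth_rcons size_sseq ltnn eqxx. Qed.

Lemma nth_sseq n i : (i < n)%N -> nth 0 (sseq n) i = s i.+1.
Proof.
elim: n => // n IHn; rewrite ltnS leq_eqVlt => /predU1P[->|lt_in].
  by rewrite s_succ /= nth_rcons size_sseq ltnn eqxx.
by rewrite /= nth_rcons size_sseq lt_in IHn.
Qed.

Definition orthonormal_upto k := forall i j : nat,
  (0 < i <= k)%N -> (0 < j <= k)%N -> ip (s i) (s j) = (i == j)%:R.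

Lemma orthonormal_upto_le k k' :
  (k' <= k)%N -> orthonormal_upto k -> orthonormal_upto k'.
Proof.
move=> le_k'k on_k i j /andP[i_gt0 le_ik'] /andP[j_gt0 le_jk'].
by rewrite on_k ?i_gt0 ?j_gt0 ?(leq_trans le_ik') ?(leq_trans le_jk').
Qed.

Lemma Lam_sseq k : orthonormal_upto k -> Lam A Sigma0 k (sseq k) = 1%:M.
Proof.
move=> on_k; apply/matrixP => a c.
by rewrite LamE !nth_sseq // on_k ?ltn_ord // !mxE eqSS.
Qed.

Definition resid k : 'cV[R]_d :=
  r0 - M *m \sum_(l < k) dotv (s l.+1) r0 *: s l.+1.

Lemma resid0 : resid 0 = r0.
Proof. by rewrite /resid big_ord0 mulmx0 subr0. Qed.

Lemma residS k : resid k.+1 = resid k - dotv (s k.+1) r0 *: (M *m s k.+1).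
Proof. by rewrite /resid big_ord_recr mulmxDr opprD addrA scalemxAr. Qed.

Lemma rk_sseq k : orthonormal_upto k -> rk A Sigma0 b x0 k (sseq k) = resid k.
Proof.
move=> on_k; rewrite /rk /xk Lam_sseq // invmx1 mulmx1 mulmxDr opprD addrA.
congr (_ - _); rewrite !mulmxA /Mw -!mulmxA mulmx_Smat; do 3 congr (_ *m _).
by apply: eq_bigr => a _; rewrite trmx_Smat_mul nth_sseq.
Qed.

Lemma stildeS k : orthonormal_upto k ->
  stilde k.+1 = resid k - ip (s k) (resid k) *: s k.
Proof.
case: k => [_|k on_k]; first by rewrite /s /= scaler0 subr0 resid0.
by rewrite /stilde /= rk_sseq.
Qed.

Lemma dotv_s_resid k i j : orthonormal_upto k -> (0 < j <= k)%N -> (i <= k)%N ->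
  dotv (s j) (resid i) = if (j <= i)%N then 0 else dotv (s j) r0.
Proof.
move=> on_k /andP[j_gt0 le_jk]; elim: i => [_|i IHi lt_ik].
  by rewrite resid0 leqNgt j_gt0.
rewrite residS dotvBr dotvZr IHi ?(ltnW lt_ik) // -ipwE on_k ?j_gt0 ?le_jk //.
have [lt_ji|gt_ji|->] := ltngtP j i.+1.
- by rewrite -ltnS lt_ji mulr0 subr0.
- by rewrite leqNgt (ltnW gt_ji) mulr0 subr0.
- by rewrite ltnn mulr1 subrr.
Qed.

Lemma dotv_s_resid_eq0 k j : orthonormal_upto k -> (j <= k)%N ->
  dotv (s j) (resid k) = 0.
Proof.
case: j => [|j] on_k le_jk; first by rewrite /s dotv0l.
by rewrite (dotv_s_resid on_k) ?le_jk.
Qed.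

Lemma resid_span k : orthonormal_upto k -> stilde k.+1 != 0 ->
  resid k = nrm (stilde k.+1) *: s k.+1 + ip (s k) (resid k) *: s k.
Proof. by move=> on_k stilde_neq0; rewrite s_succ normalizeK // stildeS // subrK. Qed.

Section NonDegenerate.
Variable m : nat.
Hypothesis stilde_neq0 : forall i : nat, (0 < i <= m)%N -> stilde i != 0.

Lemma dotv_resid_resid k i : orthonormal_upto k -> (k <= m)%N -> (i < k)%N ->
  dotv (resid i) (resid k) = 0.
Proof.
move=> on_k le_km lt_ik.
have on_i := orthonormal_upto_le (ltnW lt_ik) on_k.
rewrite (resid_span on_i) ?stilde_neq0 ?(leq_trans lt_ik le_km) //.
by rewrite dotvDl !dotvZl !dotv_s_resid_eq0 ?mulr0 ?addr0 // ltnW.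
Qed.

Lemma dotv_s_r0_neq0 j : orthonormal_upto j -> (0 < j <= m)%N ->
  dotv (s j) r0 != 0.
Proof.
case: j => // j on_j j_range; have stilde_j_neq0 := stilde_neq0 j_range.
have on_j' := orthonormal_upto_le (leqnSn j) on_j.
have resid_j := resid_span on_j' stilde_j_neq0.
have -> : dotv (s j.+1) r0 = dotv (s j.+1) (resid j).
  by rewrite (dotv_s_resid on_j) ?leqnn ?leqnSn ?ltnn.
apply: contra stilde_j_neq0 => /eqP c_eq0.
have /dotvv_eq0 resid_eq0 : dotv (resid j) (resid j) = 0.
  rewrite {1}resid_j dotvDl !dotvZl c_eq0.
  by rewrite dotv_s_resid_eq0 // !mulr0 addr0.
by rewrite stildeS // resid_eq0 ipw0r scale0r subr0.
Qed.

Lemma ipw_s_resid k j : orthonormal_upto k -> (k <= m)%N -> (0 < j < k)%N ->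
  ip (s j) (resid k) = 0.
Proof.
case: j => // j on_k le_km /andP[_ lt_jk].
have on_j := orthonormal_upto_le (ltnW lt_jk) on_k.
have /lregP c_reg := dotv_s_r0_neq0 on_j (leq_trans (ltnW lt_jk) le_km).
apply: c_reg; rewrite mulr0 (ipwEl _ Sigma0_sym) -dotvZl.
have -> : dotv (s j.+1) r0 *: (M *m s j.+1) = resid j - resid j.+1.
  by rewrite residS opprB addrC subrK.
by rewrite dotvBl !(dotv_resid_resid on_k) ?subr0 // ltnW.
Qed.

Lemma ipw_s_stilde k j : orthonormal_upto k -> (k < m)%N -> (0 < j <= k)%N ->
  ip (s j) (stilde k.+1) = 0.
Proof.
move=> on_k lt_km /andP[j_gt0 le_jk]; have k_gt0 := leq_trans j_gt0 le_jk.
rewrite stildeS // ipwBr ipwZr on_k ?j_gt0 ?k_gt0 ?le_jk ?leqnn //.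
have [->|neq_jk] := eqVneq j k; first by rewrite mulr1 subrr.
rewrite mulr0 subr0 ipw_s_resid ?(ltnW lt_km) //.
by rewrite j_gt0 ltn_neqAle neq_jk le_jk.
Qed.

Lemma orthonormal_uptoS k : (k < m)%N -> orthonormal_upto k -> orthonormal_upto k.+1.
Proof.
move=> lt_km on_k.
have s_orth j : (0 < j <= k)%N -> ip (s j) (s k.+1) = 0.
  by move=> j_range; rewrite s_succ ipwZr ipw_s_stilde ?mulr0.
have s_unit : ip (s k.+1) (s k.+1) = 1.
  by rewrite s_succ ipw_normalize ?stilde_neq0.
move=> i j /andP[i_gt0]; rewrite leq_eqVlt ltnS => /predU1P[->|le_ik].
  move=> /andP[j_gt0]; rewrite leq_eqVlt ltnS => /predU1P[->|le_jk].
    by rewrite s_unit eqxx.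
  by rewrite (ipwC _ Sigma0_sym) s_orth ?j_gt0 // gtn_eqF.
move=> /andP[j_gt0]; rewrite leq_eqVlt ltnS => /predU1P[->|le_jk].
  by rewrite s_orth ?i_gt0 // ltn_eqF.
by rewrite on_k ?i_gt0 ?j_gt0.
Qed.

Lemma orthonormal_upto_sseq k : (k <= m)%N -> orthonormal_upto k.
Proof.
elim: k => [_ [|i] j /andP[] //|k IHk lt_km].
exact/orthonormal_uptoS/IHk/ltnW.
Qed.

End NonDegenerate.
End BayesCGRecursion.

Theorem proposition7 (R : realType) (d : nat) (A Sigma0 : 'M[R]_d)
    (b x0 : 'cV[R]_d) :
  A \in unitmx ->
  Sigma0^T = Sigma0 ->
  (forall v : 'cV[R]_d, v != 0 -> 0 < (v^T *m Sigma0 *m v) 0 0) ->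
  forall m : nat,
    (forall i : nat, (1 <= i <= m)%N -> stilde A Sigma0 b x0 i != 0) ->
    (forall i j : nat, (1 <= i <= m)%N -> (1 <= j <= m)%N ->
       ipw A Sigma0 (s A Sigma0 b x0 i) (s A Sigma0 b x0 j) = (i == j)%:R)
    /\ Lam A Sigma0 m (sseq A Sigma0 b x0 m) = 1%:M.
Proof.
move=> A_unit Sigma0_sym Sigma0_pd m stilde_neq0.
have on_m := orthonormal_upto_sseq A_unit Sigma0_sym Sigma0_pd stilde_neq0 (leqnn m).
by split; [exact: on_m | exact: Lam_sseq].
Qed.
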